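(* Let $n\ge2$, $d\ge1$, $k\ge1$, let $V\in\mathcal{C}^{k+1}(\mathbb{R}^d,\mathbb{R})$, and let $u:(0,+\infty)\to\mathbb{R}^d$ be a global solution of $\ddot u(r)=-\frac{n-1}{r}\dot u(r)+\nabla V(u(r))$ such that $u(r)\to u_\infty$ as $r\to+\infty$ for some $u_\infty\in\mathbb{R}^d$ with $\nabla V(u_\infty)=0$ and $D^2V(u_\infty)$ positive definite. Then $\dot u(r)\to0$ as $r\to+\infty$. *)

From HB Require Import structures.
From mathcomp Require Import all_boot all_order all_algebra.
From mathcomp Require Import all_classical all_reals all_analysis.
Set Implicit Arguments. Unset Strict Implicit. Unset Printing Implicit Defensive.
Import Order.TTheory GRing.Theory Num.Theory.
Import numFieldNormedType.Exports.
Local Open Scope ring_scope.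
Local Open Scope classical_set_scope.

Section Defs.
Variables (R : realType) (d : nat).

Definition ebasis (i : 'I_d) : 'rV[R]_d := delta_mx 0 i.

Definition partial (i : 'I_d) (f : 'rV[R]_d -> R) (x : 'rV[R]_d) : R :=
  'D_(ebasis i) f x.

Fixpoint Ck (m : nat) (f : 'rV[R]_d -> R) : Prop :=
  match m with
  | 0 => continuous f
  | m'.+1 => (forall x, differentiable f x) /\ (forall i, Ck m' (partial i f))
  end.

Definition grad (V : 'rV[R]_d -> R) (x : 'rV[R]_d) : 'rV[R]_d :=
  \row_i partial i V x.

Definition hessian (V : 'rV[R]_d -> R) (x : 'rV[R]_d) : 'M[R]_d :=
  \matrix_(i, j) partial j (partial i V) x.

Definition posdef (A : 'M[R]_d) : Prop :=
  forall v : 'rV[R]_d, v != 0 -> 0 < (v *m A *m v^T) 0 0.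

Definition is_solution (n : nat) (V : 'rV[R]_d -> R) (u : R -> 'rV[R]_d) :=
  forall r : R, 0 < r ->
    [/\ derivable u r 1, derivable (derive1 u) r 1 &
        derive1 (derive1 u) r
          = - (((n - 1)%:R / r) *: derive1 u r) + grad V (u r)].
End Defs.

(* Write z for a coordinate of u - u_inf and c = n - 1, so that
   z'' = -(c/r) z' + g with g = d_j V(u) -> d_j V(u_inf) = 0.  The corrected
   velocity phi = z' + c z / r satisfies phi' = g - c z / r^2, which tends to 0,
   so phi varies little on [r, r + 1]; the mean value theorem applied to z gives
   a point of (r, r + 1) where z' is small, hence z'(r) is small. *)

From HB Require Import structures.
From mathcomp Require Import all_boot all_order all_algebra.
From mathcomp Require Import all_classical all_reals all_analysis.
From mathcomp Require Import ring lra.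
Import Order.TTheory GRing.Theory Num.Theory.
Import numFieldNormedType.Exports.
Local Open Scope ring_scope.
Local Open Scope classical_set_scope.

Lemma cvg_mx_entrywise (T : puniformType) (m n : nat) (U : Type)
    (F : set_system U) (FF : Filter F) (f : U -> 'M[T]_(m, n)) (M : 'M[T]_(m, n)) :
  (forall i j, f x i j @[x --> F] --> M i j) -> f x @[x --> F] --> M.
Proof.
move=> fM; apply/cvg_mx_entourageP => A entA; rewrite near_map.
apply: filter_forall => i; apply: filter_forall => j.
near=> x; rewrite inE; near: x; exact: (cvg_entourage (fM i j) entA).
Unshelve. all: by end_near.
Qed.

Lemma is_derive_mx_entry {R : realType} {m n : nat} {M : R -> 'M[R]_(m, n)} {t : R}
    (i : 'I_m) (j : 'I_n) :
  derivable M t 1 -> is_derive t 1 (fun x => M x i j) (derive1 M t i j).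
Proof.
move=> dM; have /derivable_mxP/(_ i j)/derivableP := dM.
by rewrite derive1E derive_mx // mxE.
Qed.

Lemma MVT_norm_le (R : realType) (f df : R -> R) (a b K : R) : a <= b ->
  (forall x, x \in `[a, b]%R -> is_derive x 1 f (df x)) ->
  (forall x, x \in `[a, b]%R -> `|df x| <= K) ->
  `|f b - f a| <= K * (b - a).
Proof.
move=> ab fdf dfK.
have [c cab ->] := MVT_segment ab (fun x xab => fdf x (subset_itv_oo_cc xab))
  (derivable_within_continuous (fun x xab => @ex_derive _ _ _ _ _ _ _ (fdf x xab))).
by rewrite normrM (@ger0_norm _ (b - a)) ?subr_ge0 // ler_wpM2r ?subr_ge0 ?dfK.
Qed.

Lemma normr_mul_divX_le (R : realFieldType) (c x t : R) (n : nat) :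
  `|c| <= t -> 1 <= t -> `|c * (x / t ^+ n.+1)| <= `|x|.
Proof.
move=> ct t1; have t0 : 0 < t by apply: lt_le_trans t1.
rewrite mulrCA normrM ler_piMr // normrM normfV normrX (ger0_norm (ltW t0)).
rewrite ler_pdivrMr ?exprn_gt0 // mul1r exprS (le_trans ct) //.
by rewrite ler_peMr ?(ltW t0) // exprn_ege1.
Qed.

Section damped_equation.
Variables (R : realType) (c : R) (z w g : R -> R).
Hypothesis z_w : forall t : R, 0 < t -> is_derive t 1 z (w t).
Hypothesis w_eq : forall t : R, 0 < t -> is_derive t 1 w (- (c / t * w t) + g t).

Lemma is_derive_damped_correction (t : R) : 0 < t ->
  is_derive t 1 (fun s => w s + c * (z s / s)) (g t - c * (z t / t ^+ 2)).
Proof.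
move=> t0; have inv_t := @is_deriveV R id t 1 1 (lt0r_neq0 t0) (is_derive_id _ _).
have D := is_deriveD (w_eq t t0) (is_deriveZ c (is_deriveM (z_w t t0) inv_t)).
apply: (is_derive_eq D); rewrite /GRing.scale /=; field; exact: lt0r_neq0.
Qed.

Lemma damped_solution_local_bound (r eps : R) :
  (forall t, r <= t -> [/\ `|z t| <= eps, `|g t| <= eps, 1 <= t & `|c| <= t]) ->
  `|w r| <= eps *+ 6.
Proof.
move=> bounds; have [_ _ r1 _] := bounds r (lexx r).
have pos t : r <= t -> 0 < t by move=> rt; apply: lt_le_trans (le_trans r1 rt).
have [xi /[!in_itv] /andP[rxi xir] zE] :
    exists2 xi, xi \in `]r, r + 1[%R & z (r + 1) - z r = w xi * (r + 1 - r).
  apply: MVT; first by rewrite ltrDl.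
    by move=> x /[!in_itv] /andP[rx _]; apply: z_w; apply: pos; apply: ltW.
  apply: derivable_within_continuous => x /[!in_itv] /andP[rx _].
  by have [] := z_w x (pos x rx).
have w_xi : `|w xi| <= eps + eps.
  have -> : w xi = z (r + 1) - z r by rewrite zE addrAC subrr add0r mulr1.
  have [z_r1 _ _ _] := bounds (r + 1) (ltW (lt_trans rxi xir)).
  have [z_r _ _ _] := bounds r (lexx r).
  exact: le_trans (ler_normB _ _) (lerD z_r1 z_r).
pose phi s := w s + c * (z s / s).
have phi_var : `|phi xi - phi r| <= (eps + eps) * (xi - r).
  apply: MVT_norm_le (ltW rxi) _ _ => t /[!in_itv] /andP[rt _].
    exact: is_derive_damped_correction (pos t rt).
  have [z_t g_t t1 ct] := bounds t rt.
  apply: le_trans (ler_normB _ _) (lerD g_t (le_trans _ z_t)).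
  exact: normr_mul_divX_le.
have phi_xi : `|phi xi - phi r| <= eps + eps.
  apply: le_trans phi_var _; rewrite ler_piMr ?(le_trans (normr_ge0 _) w_xi) //.
  by rewrite lerBlDl ltW.
have correction t : r <= t -> `|c * (z t / t)| <= eps.
  move=> rt; have [z_t _ t1 ct] := bounds t rt.
  by apply: le_trans z_t; rewrite -[t in z t / t]expr1 normr_mul_divX_le.
have -> : w r = w xi + c * (z xi / xi) - (phi xi - phi r) - c * (z r / r).
  by rewrite /phi; ring.
have := correction r (lexx r); have := correction xi (ltW rxi).
have := ler_normB (w xi + c * (z xi / xi) - (phi xi - phi r)) (c * (z r / r)).
have := ler_normB (w xi + c * (z xi / xi)) (phi xi - phi r).
have := ler_normD (w xi) (c * (z xi / xi)).
rewrite -mulr_natr; lra.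
Qed.

Hypothesis z_cvg0 : z t @[t --> +oo] --> 0.
Hypothesis g_cvg0 : g t @[t --> +oo] --> 0.

Lemma damped_solution_cvg0 : w t @[t --> +oo] --> 0.
Proof.
apply/cvgr0Pnorm_le => e e0.
have [M [M_real M_bounds]] : \forall t \near +oo,
    [/\ `|z t| <= e / 6, `|g t| <= e / 6, 1 <= t & `|c| <= t].
  have e6 : 0 < e / 6 by rewrite divr_gt0.
  near=> t; split; near: t.
  - exact: cvgr0_norm_le.
  - exact: cvgr0_norm_le.
  - exact: nbhs_pinfty_ge.
  - exact: nbhs_pinfty_ge.
exists M; split => // r Mr.
rewrite -[e](divfK (lt0r_neq0 (ltr0Sn R 5))) mulr_natr.
apply: damped_solution_local_bound => t rt.
by apply: M_bounds; apply: lt_le_trans rt.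
Unshelve. all: by end_near.
Qed.

End damped_equation.

Lemma Ck_continuous {R : realType} {d m : nat} {f : 'rV[R]_d -> R} :
  Ck m f -> continuous f.
Proof. by case: m => [//|m] [df _] x; apply: differentiable_continuous. Qed.

Theorem lemma2p1 (R : realType) (n d k : nat) (V : 'rV[R]_d -> R)
  (u : R -> 'rV[R]_d) (uinf : 'rV[R]_d) :
  (2 <= n)%N -> (1 <= d)%N -> (1 <= k)%N ->
  Ck k.+1 V ->
  is_solution n V u ->
  u x @[x --> +oo] --> uinf ->
  grad V uinf = 0 ->
  posdef (hessian V uinf) ->
  derive1 u x @[x --> +oo] --> (0 : 'rV[R]_d).
Proof.
move=> _ _ _ [_ Ck_partial] sol u_cvg gradV0 _.
apply: cvg_mx_entrywise => i j; rewrite mxE.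
apply: (@damped_solution_cvg0 R (n - 1)%:R (fun r => u r i j - uinf i j) _
          (fun r => partial j V (u r))).
- move=> r r0; have [du _ _] := sol r r0.
  have D := is_deriveB (is_derive_mx_entry i j du) (is_derive_cst (uinf i j) r 1).
  by apply: (is_derive_eq D); rewrite subr0.
- move=> r r0; have [_ ddu ode] := sol r r0.
  by have := is_derive_mx_entry i j ddu; rewrite ode !mxE.
- apply/subr_cvg0; exact: (cvg_comp _ _ u_cvg (@coord_continuous _ 1 d i j uinf)).
- have <- : partial j V uinf = 0.
    by have := congr1 (fun M : 'rV_d => M i j) gradV0; rewrite !mxE.
  exact: (cvg_comp _ _ u_cvg (Ck_continuous (Ck_partial j) uinf)).
Qed.
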